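(* Let $n>2$, $V=\mathbb{F}_2^n$, let $g\in\mathrm{Sym}(V)$ and let $W\le V$ be such that $\sigma_W=T\cap T^g$. If $\dim(W)=n-2$, then $T^g<\mathrm{AGL}(V)$.
   Context: $T=\{\sigma_v: v\in V\}\le\mathrm{Sym}(V)$ is the group of translations $\sigma_v:x\mapsto x+v$; $\sigma_W=\{\sigma_w:w\in W\}$; $T^g=g^{-1}Tg$. $\mathrm{AGL}(V)$ is the affine group of maps $x\mapsto xL+v$, $L\in\mathrm{GL}(V)$, $v\in V$ (the normaliser of $T$ in $\mathrm{Sym}(V)$). *)

From HB Require Import structures.
From mathcomp Require Import all_boot all_order all_algebra all_fingroup.
Set Implicit Arguments. Unset Strict Implicit. Unset Printing Implicit Defensive.
Import GRing.Theory.
Local Open Scope ring_scope.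

Notation V n := 'rV['F_2]_n.

Definition transl (n : nat) (v : V n) : {perm V n} := perm (addIr v).

Definition Tgrp (n : nat) : {set {perm V n}} := [set transl v | v : V n].

Definition sigmaW (n : nat) (W : {vspace V n}) : {set {perm V n}} :=
  [set transl w | w in (W : {pred V n})].

Definition AGL (n : nat) : {set {perm V n}} :=
  [set p : {perm V n} | [exists L : 'M['F_2]_n, [exists v : V n,
      (L \in unitmx) && [forall x : V n, p x == x *m L + v]]]].

From HB Require Import structures.
From mathcomp Require Import all_boot all_order all_algebra all_fingroup.
From mathcomp Require Import zify.
Set Implicit Arguments. Unset Strict Implicit. Unset Printing Implicit Defensive.
Import GRing.Theory.
Local Open Scope ring_scope.

(* Let tau = sigma_v be a translation and p = tau^g.  Then p is
   an involution; since sigma_W <= T^g and T^g is abelian, p commutes with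
   every translation by w in W; and since T^g is regular, if the displacement
   d(x) = p(x) + x lies in W for one x, then p = sigma_{d(x)}.  The core lemma
   [p_affine] shows that any map p with these three properties satisfies
   p(x + y) + p(0) = p(x) + p(y).  Either d takes a value in W (then p is a
   translation), or d(0) = u lies outside W; then M = W + <u> is a hyperplane,
   and since two vectors outside a hyperplane of F_2^n sum into it, one shows
   that d is constant on the cosets of M with d(x) + u in W, which forces the
   identity.  Maps with that property are affine, i.e. lie in AGL(V)
   ([affine_in_AGL]), so T^g <= AGL(V); as |T^g| = |T| and T is a proper
   subgroup of AGL(V) for n >= 2, the inclusion is proper. *)

Lemma F2_cases (b : 'F_2) : b = 0 \/ b = 1.
Proof. by case: b => [[|[|//]]] ?; [left | right]; apply/val_inj. Qed.

Section F2Vectors.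
Variable n : nat.
Local Notation V := 'rV['F_2]_n.

Lemma addvv (x : V) : x + x = 0.
Proof.
apply/rowP => j; rewrite !mxE.
by case: (F2_cases (x 0 j)) => ->; apply/val_inj.
Qed.

Lemma addvKr (x y : V) : x + y + y = x.
Proof. by rewrite -addrA addvv addr0. Qed.

Lemma addvKl (x y : V) : y + (y + x) = x.
Proof. by rewrite addrA addvv add0r. Qed.

Lemma scale_F2 (k : 'F_2) (x : V) : k *: x = 0 \/ k *: x = x.
Proof. by case: (F2_cases k) => ->; [left; rewrite scale0r | right; rewrite scale1r]. Qed.

Lemma dim_add_line (U : {vspace V}) (v : V) :
  v \notin U -> \dim (U + <[v]>) = (\dim U).+1.
Proof.
move=> vU.
have [leU eqU] := dimv_leqif_sup (addvSl U <[v]>).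
have notsub : ~~ (U + <[v]> <= U)%VS.
  apply: contra vU => sub; apply: (subvP sub); apply: (subvP (addvSr U <[v]>)).
  exact: memv_line.
have ltU : (\dim U < \dim (U + <[v]>))%N by rewrite ltn_neqAle eqU (negbTE notsub) leU.
have [leS _] := dimv_add_leqif U <[v]>.
move: leS; rewrite dim_vline; case: (v != 0) => /=; lia.
Qed.

(* A hyperplane of F_2^n has index 2: two vectors outside it sum into it. *)
Lemma hyperplane_sum (M : {vspace V}) (a b : V) :
  (0 < n)%N -> \dim M = n.-1 -> a \notin M -> b \notin M -> a + b \in M.
Proof.
move=> n_gt0 dimM aM bM.
have full : (M + <[a]>)%VS = fullv.
  apply/eqP; rewrite eqEdim subvf dimvf dim_matrix dim_add_line // dimM /=; lia.
have : b \in (M + <[a]>)%VS by rewrite full memvf.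
move=> /memv_addP [m mM [c /vlineP [k ->] bE]]; move: bM; rewrite bE.
by case: (scale_F2 k a) => ->; [rewrite addr0 mM | rewrite addrC addvKl].
Qed.

(* A map p with p(x + y) + p(0) = p(x) + p(y) is affine, hence lies in AGL(V):
   over F_2, additivity of x |-> p(x) + p(0) already means linearity. *)
Lemma affine_in_AGL (p : {perm V}) :
  (forall x y, p (x + y) + p 0 = p x + p y) -> p \in AGL n.
Proof.
move=> p_aff.
pose a x := p x + p 0.
have a_add x y : a (x + y) = a x + a y by rewrite /a p_aff addrACA addvv addr0.
have a0 : a 0 = 0 by rewrite /a addvv.
have a_scale (k : 'F_2) v : a (k *: v) = k *: a v.
  by case: (F2_cases k) => ->; rewrite ?scale0r ?scale1r.
pose L : 'M['F_2]_n := \matrix_(i, j) a (delta_mx 0 i) 0 j.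
have aL x : a x = x *m L.
  rewrite mulmx_sum_row {1}(row_sum_delta x) (big_morph a a_add a0).
  apply: eq_bigr => i _; rewrite a_scale; congr (_ *: _).
  by apply/rowP => j; rewrite !mxE.
have pL x : p x = x *m L + p 0 by rewrite -aL addvKr.
have L_unit : L \in unitmx.
  rewrite -row_free_unit; apply: inj_row_free => v vL0.
  by apply: (@perm_inj _ p); rewrite pL vL0 add0r pL mul0mx add0r.
rewrite inE; apply/existsP; exists L; apply/existsP; exists (p 0).
by rewrite L_unit; apply/forallP => x; rewrite pL.
Qed.

End F2Vectors.

Section Displacement.
Variables (n : nat) (W : {vspace 'rV['F_2]_n}) (p : 'rV['F_2]_n -> 'rV['F_2]_n).
Hypothesis n_gt2 : (2 < n)%N.
Hypothesis dimW : \dim W = (n - 2)%N.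
Hypothesis p_invol : involutive p.
Hypothesis p_shiftW : forall x w, w \in W -> p (x + w) = p x + w.
Hypothesis p_rigid : forall x y, p x + x \in W -> p y + y = p x + x.

Definition disp x := p x + x.

Lemma p_disp x : p x = x + disp x.
Proof. by rewrite /disp addrC addvKr. Qed.

Lemma disp_shiftW x w : w \in W -> disp (x + w) = disp x.
Proof. by move=> wW; rewrite /disp p_shiftW // addrACA addvv addr0. Qed.

Lemma disp_invol x : disp (p x) = disp x.
Proof. by rewrite /disp p_invol addrC. Qed.

Section DispOutsideW.
Hypothesis disp_notin : forall x, disp x \notin W.
Local Notation u := (disp 0).
Local Notation M := (W + <[disp 0]>)%VS.

Lemma mem_M m : m \in M -> m \in W \/ m + u \in W.
Proof.
move=> /memv_addP [w wW [c /vlineP [k ->] ->]].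
by case: (scale_F2 k u) => ->; [left; rewrite addr0 | right; rewrite addvKr].
Qed.

Lemma u_in_M : u \in M.
Proof. by apply: (subvP (addvSr W _)); apply: memv_line. Qed.

Lemma dim_M : \dim M = n.-1.
Proof. by rewrite dim_add_line // dimW; lia. Qed.

(* M is a union of two W-cosets, W and p(0) + W, on both of which d = u. *)
Lemma disp_on_M x : x \in M -> disp x = u.
Proof.
case/mem_M => [xW | xuW]; first by rewrite -[x]add0r disp_shiftW.
have -> : x = p 0 + (x + u) by rewrite p_disp add0r addrC addvKr.
by rewrite disp_shiftW // disp_invol.
Qed.

(* Every displacement is congruent to u modulo W: otherwise x and d(x) lie
   outside M, so p(x) = x + d(x) lies in M and d(x) = d(p(x)) = u, absurd. *)
Lemma disp_add_u x : disp x + u \in W.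
Proof.
have [xM | xM] := boolP (x \in M); first by rewrite disp_on_M // addvv mem0v.
have [dM | dM] := boolP (disp x \in M).
  by case/mem_M: dM => // dW; move: (disp_notin x); rewrite dW.
have := hyperplane_sum (ltnW (ltnW n_gt2)) dim_M xM dM.
rewrite -p_disp => /disp_on_M; rewrite disp_invol => dxu.
by move: dM; rewrite dxu u_in_M.
Qed.

Lemma disp_coset x y : x + y \in M -> disp x = disp y.
Proof.
case/mem_M => [xyW | xyuW]; first by rewrite -(addvKl y x) disp_shiftW.
have -> : y = p x + ((disp x + u) + (x + y + u)).
  by rewrite p_disp (addrC (disp x + u)) -(addrA x y u) addrACA !addvKl addvKr.
by rewrite disp_shiftW ?disp_invol // memvD // disp_add_u.
Qed.

Lemma disp_affine_out x y : disp (x + y) + disp 0 = disp x + disp y.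
Proof.
have n_gt0 : (0 < n)%N by apply: ltnW; apply: ltnW.
have [xM | xM] := boolP (x \in M).
  have -> : disp x = disp 0 by apply: disp_coset; rewrite addr0.
  have -> : disp (x + y) = disp y by apply: disp_coset; rewrite addvKr.
  by rewrite addrC.
have [yM | yM] := boolP (y \in M).
  have -> : disp y = disp 0 by apply: disp_coset; rewrite addr0.
  by have -> : disp (x + y) = disp x by apply: disp_coset; rewrite addrAC addvv add0r.
have xyM := hyperplane_sum n_gt0 dim_M xM yM.
have -> : disp (x + y) = disp 0 by apply: disp_coset; rewrite addr0.
have -> : disp x = disp y by apply: disp_coset.
by rewrite !addvv.
Qed.

End DispOutsideW.

(* If some displacement lies in W, then d is constant and p a translation. *)
Lemma disp_affine x y : disp (x + y) + disp 0 = disp x + disp y.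
Proof.
have [/existsP [x0 dx0] | /existsPn disp_notin] := boolP [exists x0, disp x0 \in W].
  by rewrite /disp !(p_rigid _ dx0) -/(disp x0) !addvv.
exact: disp_affine_out.
Qed.

Lemma p_affine x y : p (x + y) + p 0 = p x + p y.
Proof. by rewrite !p_disp addrACA disp_affine addr0 addrACA. Qed.

End Displacement.

Section ConjugateTranslations.
Variable n : nat.
Local Notation V := 'rV['F_2]_n.
Implicit Types (g : {perm V}) (v : V).

Lemma conj_translE g v x : ((transl v) ^ g)%g x = g (g^-1%g x + v).
Proof. by rewrite /conjg !permM /transl permE. Qed.

Lemma conj_transl_invol g v : involutive ((transl v) ^ g)%g.
Proof. by move=> x; rewrite !conj_translE permK addvKr permKV. Qed.

Lemma conj_transl_reg g v1 v2 x :
  ((transl v1) ^ g)%g x = ((transl v2) ^ g)%g x -> v1 = v2.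
Proof. by rewrite !conj_translE => /perm_inj /addrI. Qed.

Lemma conj_transl_comm g v1 v2 x :
  ((transl v1) ^ g)%g (((transl v2) ^ g)%g x)
  = ((transl v2) ^ g)%g (((transl v1) ^ g)%g x).
Proof. by rewrite !conj_translE !permK -!addrA (addrC v1). Qed.

Lemma translW_conj g (W : {vspace V}) w :
  sigmaW W = Tgrp n :&: (Tgrp n :^ g)%g -> w \in W ->
  exists v, transl w = ((transl v) ^ g)%g.
Proof.
move=> sigmaWE wW; have : transl w \in sigmaW W by apply: imset_f.
by rewrite sigmaWE => /setIP [_ /imsetP [t /imsetP [v _ ->] ->]]; exists v.
Qed.

Lemma conjT_sub_AGL g (W : {vspace V}) :
  (2 < n)%N -> sigmaW W = Tgrp n :&: (Tgrp n :^ g)%g -> \dim W = (n - 2)%N ->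
  (Tgrp n :^ g \subset AGL n)%g.
Proof.
move=> n_gt2 sigmaWE dimW; apply/subsetP => q /imsetP [t /imsetP [v _ ->] ->].
apply: affine_in_AGL; apply: (p_affine n_gt2 dimW (conj_transl_invol g v)).
- move=> x w wW; have [v' ev'] := translW_conj sigmaWE wW.
  have shift z : z + w = ((transl v') ^ g)%g z by rewrite -ev' /transl permE.
  by rewrite !shift conj_transl_comm.
- move=> x y dxW; have [v' ev'] := translW_conj sigmaWE dxW.
  have shift z : ((transl v') ^ g)%g z = z + (((transl v) ^ g)%g x + x).
    by rewrite -ev' /transl permE.
  have vv' : v = v' by apply: (@conj_transl_reg g _ _ x); rewrite shift addrC addvKr.
  by rewrite {1}vv' shift addrC addvKl.
Qed.

Lemma transl_AGL v : transl v \in AGL n.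
Proof.
apply: affine_in_AGL => x y; rewrite /transl !permE add0r addvKr.
by rewrite addrACA addvv addr0.
Qed.

(* For n >= 2 the linear map swapping two coordinates is not a translation,
   so T is a proper subgroup of AGL(V). *)
Lemma T_proper_AGL : (1 < n)%N -> Tgrp n \proper AGL n.
Proof.
move=> n_gt1; have n_gt0 : (0 < n)%N by apply: ltnW.
pose i0 : 'I_n := Ordinal n_gt0; pose i1 : 'I_n := Ordinal n_gt1.
pose P : 'M['F_2]_n := perm_mx (tperm i0 i1).
have P_inj : injective (fun x : V => x *m P).
  by apply: row_free_inj; rewrite row_free_unit unitmx_perm.
apply/properP; split.
  by apply/subsetP => t /imsetP [v _ ->]; apply: transl_AGL.
exists (perm P_inj).
  by apply: affine_in_AGL => x y; rewrite !permE mulmxDl mul0mx addr0.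
apply/negP => /imsetP [v _ eP].
have v0 : v = 0.
  by have := congr1 (fun f : {perm V} => f 0) eP; rewrite /transl !permE mul0mx add0r.
have := congr1 (fun f : {perm V} => f (delta_mx 0 i0) 0 i1) eP.
rewrite /transl !permE v0 addr0 -rowE !mxE tpermL eqxx /=.
by move/eqP; rewrite oner_eq0.
Qed.

End ConjugateTranslations.

Theorem mainTheorem7 (n : nat) (g : {perm 'rV['F_2]_n}) (W : {vspace 'rV['F_2]_n}) :
  (2 < n)%N ->
  sigmaW W = Tgrp n :&: (Tgrp n :^ g)%g ->
  \dim W = (n - 2)%N ->
  (Tgrp n :^ g)%g \proper AGL n.
Proof.
move=> n_gt2 sigmaWE dimW.
rewrite properEcard (conjT_sub_AGL n_gt2 sigmaWE dimW) cardJg.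
by apply: proper_card; apply: T_proper_AGL; apply: ltnW.
Qed.
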